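(* Let $p\ge2$ be an integer and consider the $p$-Pass algorithm run with arbitrary orderings of $V$ in each pass. For every $1\le i\le p-1$ and every $\alpha\ge0$: if $\sum_{j=1}^ik_j\ge k\big(\frac ip+\alpha\big)$, then $$f(S_i)\ge\Big(1-\big(\tfrac{p}{p+1}\big)^i+\alpha\big(\tfrac{p}{p+1}\big)^{i+1}\Big)\mathrm{OPT}.$$
   Context: $V$ is a finite ground set with $|V|=n$; $f:2^V\to\mathbb{R}_{\ge0}$ is monotone, submodular and normalized; $f(e\mid Y)=f(Y\cup\{e\})-f(Y)$. $k\le n$ is a positive integer and $\mathrm{OPT}=\max\{f(S):S\subseteq V,|S|\le k\}$. $p$-Pass algorithm (knows $\mathrm{OPT}$): start with $S=\emptyset$; for $i=1,\dots,p$, make a pass over all elements of $V$ (in some order) and add each element $e$ to $S$ if $|S|<k$ and $f(e\mid S)\ge(\frac{p}{p+1})^i\cdot\frac{\mathrm{OPT}}{k}$; return $S$. $S_i$ denotes the set $S$ after the $i$-th pass ($S_0=\emptyset$) and $k_i=|S_i\setminus S_{i-1}|$. *)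

From HB Require Import structures.
From mathcomp Require Import all_boot all_order all_algebra.
Set Implicit Arguments. Unset Strict Implicit. Unset Printing Implicit Defensive.
Import Order.TTheory GRing.Theory Num.Theory.
Local Open Scope ring_scope.

Section Defs.
Variables (R : realFieldType) (V : finType).
Implicit Types (f : {set V} -> R) (S Y A B : {set V}).

Definition normalized f := f set0 = 0.
Definition nonneg f := forall S, 0 <= f S.
Definition monotone f := forall A B, A \subset B -> f A <= f B.
Definition submodular f := forall A B, f (A :|: B) + f (A :&: B) <= f A + f B.

Definition marg f (e : V) Y := f (e |: Y) - f Y.

(* OPT = max { f S : |S| <= k } (f >= 0, so 0 is a harmless neutral element) *)
Definition OPT f (k : nat) : R := \big[Num.max/0]_(S : {set V} | (#|S| <= k)%N) f S.

Definition thr f (k p i : nat) : R := (p%:R / (p.+1)%:R) ^+ i * OPT f k / k%:R.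

Definition pass_step f (k : nat) (th : R) S (e : V) : {set V} :=
  if (#|S| < k)%N && (th <= marg f e S) then e |: S else S.

Definition run_pass f k th S (s : seq V) : {set V} := foldl (pass_step f k th) S s.

Fixpoint pass_set f (k p : nat) (ords : nat -> seq V) (i : nat) : {set V} :=
  match i with
  | 0 => set0
  | i'.+1 => run_pass f k (thr f k p i'.+1) (pass_set f k p ords i') (ords i'.+1)
  end.

Definition kk f k p ords (i : nat) : nat :=
  #|pass_set f k p ords i :\: pass_set f k p ords i.-1|.
End Defs.

From HB Require Import structures.
From mathcomp Require Import all_boot all_order all_algebra.
From mathcomp Require Import ring lra.
Import Order.TTheory GRing.Theory Num.Theory.
Local Open Scope ring_scope.
Set Implicit Arguments. Unset Strict Implicit.

(* Write [q = p/(p+1)], so pass [i] accepts marginal gains of at least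
   [q^i OPT / k].  A pass that ends with fewer than [k] elements leaves every
   element with marginal gain below its threshold, so by submodularity
   [OPT <= f(S_i) + q^i OPT], i.e. [f(S_i) >= (1 - q^i) OPT].  The theorem
   follows by induction on [i]: before pass [i+1], either [S_i] already has
   [k (i/p + b)] elements and the induction hypothesis applies with excess [b],
   or [S_i] is unsaturated; pass [i+1] then adds [k_(i+1)] elements worth
   [q^(i+1) OPT / k] each, and the identity [q/p = 1 - q] balances the sums. *)

Section Submodular.
Variables (R : realFieldType) (V : finType) (f : {set V} -> R).
Hypotheses (f_mono : monotone f) (f_sub : submodular f).

Lemma marg_antimono e (T U : {set V}) : T \subset U -> marg f e U <= marg f e T.
Proof.
move=> TU; rewrite /marg.
have := f_sub (e |: T) U.
have -> : (e |: T) :|: U = e |: U by rewrite -setUA (setUidPr TU).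
have : f T <= f ((e |: T) :&: U) by apply: f_mono; rewrite subsetI subsetUr TU.
lra.
Qed.

Lemma f_setU_le_sum_marg (A S : {set V}) :
  f (A :|: S) <= f S + \sum_(e in A) marg f e S.
Proof.
rewrite -big_enum -{1}(set_enum A).
elim: (enum A) => [|x s IH]; first by rewrite set_nil set0U big_nil addr0.
rewrite set_cons -setUA big_cons /=.
have : marg f x ([set:: s] :|: S) <= marg f x S by apply/marg_antimono/subsetUr.
move: IH; rewrite /marg; lra.
Qed.

Lemma f_setU_le_card_mul (th : R) (A S : {set V}) :
  (forall e, marg f e S <= th) -> f (A :|: S) <= f S + #|A|%:R * th.
Proof.
move=> marg_le; apply: le_trans (f_setU_le_sum_marg A S) _.
by rewrite lerD2l mulr_natl -sumr_const ler_sum.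
Qed.

End Submodular.

Section OnePass.
Variables (R : realFieldType) (V : finType) (f : {set V} -> R) (k : nat) (th : R).
Implicit Types (S : {set V}) (s : seq V).

Lemma subset_run_pass S s : S \subset run_pass f k th S s.
Proof.
elim: s S => [|e s IH] S /=; first exact: subxx.
apply: subset_trans (IH _); rewrite /pass_step; case: ifP => _ //; exact: subsetUr.
Qed.

Lemma run_pass_gain S s :
  0 <= th -> f S + #|run_pass f k th S s :\: S|%:R * th <= f (run_pass f k th S s).
Proof.
move=> th_ge0; elim: s S => [|e s IH] S /=.
  by rewrite /run_pass /= setDv cards0 mul0r addr0.
have := IH (pass_step f k th S e); rewrite /run_pass /=.
set T := foldl _ _ s.
rewrite /pass_step; case: ifP => [/andP[_ gain_e] | _] //.
have card_le : (#|T :\: S| <= #|T :\: (e |: S)| + 1)%N.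
  apply: leq_trans (_ : #|e |: (T :\: (e |: S))| <= _)%N.
    by apply/subset_leq_card/subsetP => x; rewrite !inE; case: (x == e).
  by rewrite cardsU1 addnC leq_add2l leq_b1.
have : #|T :\: S|%:R * th <= (#|T :\: (e |: S)|%:R + 1) * th.
  by apply: ler_wpM2r => //; rewrite natr1 ler_nat -addn1.
move: gain_e; rewrite /marg; lra.
Qed.

Hypotheses (f_mono : monotone f) (f_sub : submodular f).

(* A pass that ends below capacity rejected each element it did not take,
   and by diminishing returns its gain is still below the threshold at the end. *)
Lemma run_pass_unsaturated S s e :
  (#|run_pass f k th S s| < k)%N -> e \in s ->
  e \in run_pass f k th S s \/ marg f e (run_pass f k th S s) < th.
Proof.
elim: s S => [|x s IH] S //=; rewrite inE => card_lt /orP[/eqP-> | e_s]; last exact: IH.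
move: card_lt (subset_run_pass (pass_step f k th S x) s); rewrite /run_pass /=.
set T := foldl _ _ s => card_lt; rewrite /pass_step; case: ifP => [_ sub_T | ].
  by left; apply: (subsetP sub_T); rewrite setU11.
move=> /negbT; rewrite negb_and -ltNge => rejected sub_T; right.
have card_S : (#|S| < k)%N by apply: leq_ltn_trans (subset_leq_card sub_T) card_lt.
move: rejected; rewrite card_S /= => gain_lt.
exact: le_lt_trans (marg_antimono f_mono f_sub _ sub_T) gain_lt.
Qed.

End OnePass.

Section Optimum.
Variables (R : realFieldType) (V : finType) (f : {set V} -> R) (k : nat).

Lemma OPT_ge0 : nonneg f -> 0 <= OPT f k.
Proof.
by move=> f_ge0; rewrite /OPT; elim/big_ind: _ => // x y; rewrite le_max => ->.
Qed.

Lemma OPT_le (B : R) :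
  0 <= B -> (forall S : {set V}, (#|S| <= k)%N -> f S <= B) -> OPT f k <= B.
Proof.
by move=> B_ge0 f_le; rewrite /OPT; elim/big_ind: _ => // x y; rewrite ge_max => -> ->.
Qed.

End Optimum.

Section Passes.
Variables (R : realFieldType) (V : finType) (f : {set V} -> R).
Variables (k p : nat) (ords : nat -> seq V).
Hypotheses (f_ge0 : nonneg f) (f_mono : monotone f) (f_sub : submodular f).
Hypotheses (k_gt0 : (0 < k)%N) (p_gt0 : (0 < p)%N).
Hypothesis ords_perm : forall j, (0 < j <= p)%N -> perm_eq (ords j) (enum V).

Local Notation q := (p%:R / p.+1%:R : R).
Local Notation S := (pass_set f k p ords).

(* The decisive identity is [q / p = 1 - q]. *)
Lemma geometric_step n (a c : R) :
  0 <= a -> p%:R^-1 + a <= c ->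
  1 - q ^+ n.+1 + a * q ^+ n.+2 <= 1 - q ^+ n + c * q ^+ n.+1.
Proof.
move=> a_ge0 c_ge.
have q_ge0 : 0 <= q by rewrite divr_ge0.
have q_le1 : q <= 1 by rewrite ler_pdivrMr ?ltr0n // mul1r ler_nat.
have Qq_ge0 : 0 <= q ^+ n.+1 by rewrite exprn_ge0.
rewrite -subr_ge0.
have -> : 1 - q ^+ n + c * q ^+ n.+1 - (1 - q ^+ n.+1 + a * q ^+ n.+2)
          = q ^+ n.+1 * (c - (p%:R^-1 + a)) + a * q ^+ n.+1 * (1 - q).
  rewrite !exprSr -[p.+1]addn1 natrD; field.
  by rewrite natr1 !pnatr_eq0 /= -lt0n.
by rewrite addr_ge0 // !mulr_ge0 // subr_ge0.
Qed.

Lemma thr_ge0 i : 0 <= thr f k p i.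
Proof. by rewrite divr_ge0 ?mulr_ge0 ?exprn_ge0 ?divr_ge0 ?OPT_ge0. Qed.

Lemma mulr_thr i : k%:R * thr f k p i = q ^+ i * OPT f k.
Proof. by rewrite /thr mulrC divfK // pnatr_eq0 -lt0n. Qed.

Lemma card_pass_setS i : #|S i.+1| = (#|S i| + kk f k p ords i.+1)%N.
Proof.
rewrite /kk (cardsDS (subset_run_pass _ _ _ _ _)) subnKC //.
exact/subset_leq_card/subset_run_pass.
Qed.

Lemma card_pass_set i : #|S i| = (\sum_(1 <= j < i.+1) kk f k p ords j)%N.
Proof.
elim: i => [|i IH]; first by rewrite big_geq //= cards0.
by rewrite big_nat_recr //= -IH card_pass_setS.
Qed.

Lemma pass_set_gain i :
  f (S i) + (kk f k p ords i.+1)%:R * thr f k p i.+1 <= f (S i.+1).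
Proof. exact: run_pass_gain (thr_ge0 _). Qed.

Lemma pass_set_unsaturated m :
  (m <= p)%N -> (#|S m| < k)%N -> (1 - q ^+ m) * OPT f k <= f (S m).
Proof.
case: m => [|m] m_le card_lt; first by rewrite expr0 subrr mul0r; apply: f_ge0.
have marg_le e : marg f e (S m.+1) <= thr f k p m.+1.
  have e_in : e \in ords m.+1 by rewrite (perm_mem (ords_perm _)) ?mem_enum.
  have [e_S | /ltW //] := run_pass_unsaturated f_mono f_sub card_lt e_in.
  by rewrite /marg (setUidPr _) ?sub1set ?subrr ?thr_ge0.
have : OPT f k <= f (S m.+1) + k%:R * thr f k p m.+1.
  apply: OPT_le => [|O card_O].
    exact: addr_ge0 (f_ge0 _) (mulr_ge0 (ler0n _ _) (thr_ge0 _)).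
  apply: le_trans (f_mono (subsetUl O (S m.+1))) _.
  apply: le_trans (f_setU_le_card_mul f_mono f_sub O marg_le) _.
  by rewrite lerD2l ler_wpM2r ?thr_ge0 ?ler_nat.
rewrite mulr_thr; lra.
Qed.

Lemma pass_set_lower_bound i alpha :
  (i <= p)%N -> 0 <= alpha -> k%:R * (i%:R / p%:R + alpha) <= #|S i|%:R ->
  (1 - q ^+ i + alpha * q ^+ i.+1) * OPT f k <= f (S i).
Proof.
have K_gt0 : 0 < k%:R :> R by rewrite ltr0n.
have P_gt0 : 0 < p%:R :> R by rewrite ltr0n.
elim: i alpha => [|i IH] alpha i_le alpha_ge0.
  rewrite mul0r add0r cards0 pmulr_rle0 // => alpha_le0.
  have -> : alpha = 0 by apply/le_anti/andP.
  by rewrite expr0 subrr !mul0r add0r mul0r; apply: f_ge0.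
rewrite card_pass_setS natrD -natr1 => card_ge.
set s := #|S i|%:R in card_ge; set x := (kk f k p ords i.+1)%:R in card_ge.
(* [b] measures how far [S i] exceeds [k i / p]; when it does not, pass [i]
   left room and the saturation bound applies instead of the induction. *)
have [b [b_ge0 b_ge S_ge]] : exists b, [/\ 0 <= b, s / k%:R - i%:R / p%:R <= b
    & (1 - q ^+ i + b * q ^+ i.+1) * OPT f k <= f (S i)].
  have [s_ge | s_lt] := lerP (k%:R * (i%:R / p%:R)) s.
    have beta_ge0 : 0 <= s / k%:R - i%:R / p%:R.
      by rewrite subr_ge0 ler_pdivlMr // mulrC.
    exists (s / k%:R - i%:R / p%:R); split; rewrite ?lexx //.
    apply: IH => //; first exact: ltnW.
    by rewrite addrC subrK mulrC divfK ?gt_eqF.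
  exists 0; split => //.
    by rewrite subr_le0 ler_pdivrMr // mulrC ltW.
  rewrite mul0r addr0; apply: pass_set_unsaturated (ltnW i_le) _.
  rewrite -(ltr_nat R); apply: lt_le_trans s_lt _.
  by rewrite ger_pMr // ler_pdivrMr // mul1r ler_nat ltnW.
have c_ge : p%:R^-1 + alpha <= b + x / k%:R.
  move: card_ge; rewrite -ler_pdivlMl // mulrDl mul1r mulrDr.
  rewrite ![k%:R^-1 * _]mulrC; lra.
apply: le_trans (pass_set_gain i).
have := ler_wpM2r (OPT_ge0 k f_ge0) (geometric_step i alpha_ge0 c_ge).
have -> : (1 - q ^+ i + (b + x / k%:R) * q ^+ i.+1) * OPT f k
          = (1 - q ^+ i + b * q ^+ i.+1) * OPT f k + x * thr f k p i.+1.
  by rewrite /thr; field; rewrite gt_eqF.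
rewrite -/x; lra.
Qed.

End Passes.

Theorem mainTheorem18 (R : realFieldType) (V : finType) (f : {set V} -> R)
  (k p : nat) (ords : nat -> seq V) (i : nat) (alpha : R) :
  nonneg f -> monotone f -> submodular f -> normalized f ->
  (0 < k)%N -> (k <= #|V|)%N -> (2 <= p)%N ->
  (forall j, (0 < j <= p)%N -> perm_eq (ords j) (enum V)) ->
  (1 <= i <= p.-1)%N -> 0 <= alpha ->
  k%:R * (i%:R / p%:R + alpha) <= (\sum_(1 <= j < i.+1) kk f k p ords j)%:R ->
  (1 - (p%:R / (p.+1)%:R) ^+ i + alpha * (p%:R / (p.+1)%:R) ^+ i.+1) * OPT f k
    <= f (pass_set f k p ords i).
Proof.
move=> f_ge0 f_mono f_sub _ k_gt0 _ p_ge2 ords_perm /andP[_ i_lt] alpha_ge0.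
have p_gt0 : (0 < p)%N by apply: ltnW.
have i_le : (i <= p)%N by apply: leq_trans i_lt (leq_pred p).
rewrite -card_pass_set.
exact: pass_set_lower_bound.
Qed.
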